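(* Let $A$ be an associative unital algebra over a commutative ring $k$ and $B$ a subalgebra with $L(A)\subseteq B\subseteq\mathrm{End}_k(A)$ such that $A^B\subseteq Z(A)$ (the centre of $A$). Then $A$ is a critically compressible left $B$-module if and only if $A^B$ is an integral domain and large in $A$.
   Context: $L(A)=\{L_a:a\in A\}$, $L_a(x)=ax$; $A$ is a left $B$-module via $\varphi\cdot a=\varphi(a)$. $A^B=\{a\in A: b\cdot a=(b\cdot1)a\ \forall b\in B\}\cong\mathrm{End}_B(A)$. $A^B$ is large in $A$ if $A^B\cap I\neq 0$ for every nonzero $B$-stable left ideal $I$ of $A$. A nonzero module is critically compressible if it embeds into each of its nonzero submodules and into none of its factor modules $M/N$ with $N\neq0$. *)

From HB Require Import structures.
From mathcomp Require Import all_boot all_order all_algebra.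
Set Implicit Arguments. Unset Strict Implicit. Unset Printing Implicit Defensive.
Import GRing.Theory.
Local Open Scope ring_scope.

Section Defs.
Variables (k : comPzRingType) (A : algType k).

Definition Lmul (a : A) : A -> A := fun x => a * x.

Definition klinear (f : A -> A) : Prop :=
  forall (c : k) (x y : A), f (c *: x + y) = c *: f x + f y.

Definition is_subalg_End (B : (A -> A) -> Prop) : Prop :=
  (forall f, B f -> klinear f) /\
  B (fun x => x) /\
  B (fun _ => 0) /\
  (forall f g, B f -> B g -> B (fun x => f x + g x)) /\
  (forall f, B f -> B (fun x => - f x)) /\
  (forall c f, B f -> B (fun x => c *: f x)) /\
  (forall f g, B f -> B g -> B (fun x => f (g x))).

Definition contains_L (B : (A -> A) -> Prop) : Prop := forall a : A, B (Lmul a).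

Definition invariants (B : (A -> A) -> Prop) (a : A) : Prop :=
  forall b, B b -> b a = b 1 * a.

Definition centre (a : A) : Prop := forall x : A, a * x = x * a.

Definition is_Bsubmod (B : (A -> A) -> Prop) (N : A -> Prop) : Prop :=
  [/\ N 0, (forall x y, N x -> N y -> N (x + y)) &
      (forall b x, B b -> N x -> N (b x))].

Definition is_Bstable_left_ideal (B : (A -> A) -> Prop) (I : A -> Prop) : Prop :=
  [/\ I 0, (forall x y, I x -> I y -> I (x + y)),
      (forall x, I x -> I (- x)),
      (forall a x, I x -> I (a * x)) &
      (forall b x, B b -> I x -> I (b x))].

Definition nonzero_set (N : A -> Prop) : Prop := exists x, N x /\ x <> 0.

Definition Bhom (B : (A -> A) -> Prop) (f : A -> A) : Prop :=
  (forall x y, f (x + y) = f x + f y) /\ (forall b x, B b -> f (b x) = b (f x)).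

Definition embeds_into_sub (B : (A -> A) -> Prop) (N : A -> Prop) : Prop :=
  exists f, [/\ Bhom B f, injective f & forall x, N (f x)].

(* A embeds into the factor module A/N: an injective B-linear map A -> A/N,
   described through a choice of representatives g : A -> A. *)
Definition embeds_into_quot (B : (A -> A) -> Prop) (N : A -> Prop) : Prop :=
  exists g : A -> A,
    [/\ (forall x y, N (g (x + y) - (g x + g y))),
        (forall b x, B b -> N (g (b x) - b (g x))) &
        (forall x, N (g x) -> x = 0)].

Definition critically_compressible (B : (A -> A) -> Prop) : Prop :=
  [/\ exists x : A, x <> 0,
      (forall N, is_Bsubmod B N -> nonzero_set N -> embeds_into_sub B N) &
      (forall N, is_Bsubmod B N -> nonzero_set N -> ~ embeds_into_quot B N)].

Definition is_integral_domain (S : A -> Prop) : Prop :=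
  [/\ (forall x y, S x -> S y -> x * y = y * x),
      (1 : A) <> 0 &
      (forall x y, S x -> S y -> x * y = 0 -> x = 0 \/ y = 0)].

Definition large_in (B : (A -> A) -> Prop) (S : A -> Prop) : Prop :=
  forall I, is_Bstable_left_ideal B I -> nonzero_set I ->
    exists x, S x /\ I x /\ x <> 0.

End Defs.

From HB Require Import structures.
From mathcomp Require Import all_boot all_order all_algebra.
Set Implicit Arguments. Unset Strict Implicit. Unset Printing Implicit Defensive.
Import GRing.Theory.
Local Open Scope ring_scope.

(* Since L(A) ⊆ B, a B-linear map f : A -> A is right multiplication by the
   invariant f 1, and conversely right multiplication by an invariant is
   B-linear; so A^B ≅ End_B(A).  An embedding A -> N of a nonzero submodule
   thus yields a right-regular invariant in N, and largeness of A^B yields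
   such elements when A^B is a domain.  A zero divisor x y = 0 in A^B would
   make A embed into A / ann(y) through z |-> z d, where d y is a regular
   invariant of A y; conversely a nonzero central invariant c of N kills any
   embedding g into A / N, since c g(1) ∈ N forces g(c) ∈ N. *)

Section Invariants.
Variables (k : comPzRingType) (A : algType k) (B : (A -> A) -> Prop).
Hypothesis hB : is_subalg_End B.
Hypothesis hL : contains_L B.

Lemma Bmap0 b : B b -> b 0 = 0.
Proof.
move=> Bb; have [hlin _] := hB.
have := hlin b Bb 1 0 0; rewrite !scale1r addr0 => e.
by apply: (@addrI _ (b 0)); rewrite addr0 -e.
Qed.

Lemma B_opp : B (fun x => - x).
Proof. by have [_ [hid [_ [_ [hopp _]]]]] := hB; apply: hopp. Qed.

Lemma invariant_mulr c b x : invariants B c -> B b -> b (x * c) = b x * c.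
Proof.
move=> hc Bb; have [_ [_ [_ [_ [_ [_ hcomp]]]]]] := hB.
by have := hc _ (hcomp b (Lmul x) Bb (hL x)); rewrite /Lmul mulr1.
Qed.

Lemma Bsubmod_mull N a x : is_Bsubmod B N -> N x -> N (a * x).
Proof. by case=> _ _ hb Nx; apply: (hb _ _ (hL a) Nx). Qed.

Lemma Bsubmod_left_ideal N : is_Bsubmod B N -> is_Bstable_left_ideal B N.
Proof.
move=> hN; have [h0 hadd hb] := hN; split=> // [x Nx|a x Nx].
- exact: hb _ _ B_opp Nx.
- exact: Bsubmod_mull.
Qed.

Lemma left_ideal_Bsubmod I : is_Bstable_left_ideal B I -> is_Bsubmod B I.
Proof. by case. Qed.

Lemma Bhom0 f : Bhom B f -> f 0 = 0.
Proof.
case=> hadd _; have := hadd 0 0; rewrite addr0 => e.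
by apply: (@addrI _ (f 0)); rewrite addr0 -e.
Qed.

Lemma Bhom_mulr1 f a : Bhom B f -> f a = a * f 1.
Proof. by case=> _ hf; have := hf (Lmul a) 1 (hL a); rewrite /Lmul mulr1. Qed.

Lemma Bhom1_invariant f : Bhom B f -> invariants B (f 1).
Proof.
by move=> hf b Bb; have [_ h] := hf; rewrite -(h b 1 Bb); apply: Bhom_mulr1.
Qed.

Lemma invariant_Bhom_mulr c : invariants B c -> Bhom B (fun x => x * c).
Proof.
move=> hc; split=> [x y|b x Bb]; first exact: mulrDl.
by rewrite invariant_mulr.
Qed.

Lemma annihilator_Bsubmod y : invariants B y -> is_Bsubmod B (fun a => a * y = 0).
Proof.
move=> hy; split=> [|x z hx hz|b x Bb hx]; first by rewrite mul0r.
- by rewrite mulrDl hx hz addr0.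
- by rewrite -invariant_mulr // hx Bmap0.
Qed.

Lemma mulr_image_Bsubmod y :
  invariants B y -> is_Bsubmod B (fun a => exists d, a = d * y).
Proof.
move=> hy; split=> [|x z [d ->] [e ->]|b x Bb [d ->]].
- by exists 0; rewrite mul0r.
- by exists (d + e); rewrite mulrDl.
- by exists (b d); rewrite invariant_mulr.
Qed.

Lemma embeds_into_sub_regular_invariant N :
  (1 : A) <> 0 -> embeds_into_sub B N ->
  exists c, [/\ invariants B c, N c, c <> 0 & forall x, x * c = 0 -> x = 0].
Proof.
move=> one_nz [f [hf finj fN]]; exists (f 1); split=> [||c0|x e].
- exact: Bhom1_invariant.
- exact: fN.
- by apply: one_nz; apply: finj; rewrite c0 (Bhom0 hf).
- by apply: finj; rewrite (Bhom0 hf) (Bhom_mulr1 x hf).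
Qed.

Lemma embeds_into_quot_annihilator y d :
  invariants B y -> invariants B (d * y) -> (forall x, x * (d * y) = 0 -> x = 0) ->
  embeds_into_quot B (fun a => a * y = 0).
Proof.
move=> hy hdy dy_reg; exists (fun z => z * d); split=> [u v|b u Bb|u] /=.
- by rewrite [(u + v) * d]mulrDl subrr mul0r.
- rewrite mulrDl mulNr -mulrA -(invariant_mulr _ hy Bb) -mulrA.
  by rewrite (invariant_mulr _ hdy Bb) subrr.
- by rewrite -mulrA; apply: dy_reg.
Qed.

Lemma invariants_no_zero_divisors x y :
  (forall N, is_Bsubmod B N -> nonzero_set N ->
     exists c, [/\ invariants B c, N c, c <> 0 & forall z, z * c = 0 -> z = 0]) ->
  (forall N, is_Bsubmod B N -> nonzero_set N -> ~ embeds_into_quot B N) ->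
  invariants B y -> x * y = 0 -> x = 0 \/ y = 0.
Proof.
move=> regular hquot hy xy0.
have [->|xn] := eqVneq x 0; [by left | have [->|yn] := eqVneq y 0; [by right|]].
have nz_Ay : nonzero_set (fun a => exists d, a = d * y).
  by exists y; split; [exists 1; rewrite mul1r | apply/eqP].
have [c [hc [d def_c] _ c_reg]] := regular _ (mulr_image_Bsubmod hy) nz_Ay.
subst c; exfalso; apply: (hquot _ (annihilator_Bsubmod hy)).
  by exists x; split=> //; apply/eqP.
exact: embeds_into_quot_annihilator hy hc c_reg.
Qed.

Lemma large_domain_invariant_regular c x :
  is_integral_domain (invariants B) -> large_in B (invariants B) ->
  invariants B c -> c <> 0 -> x * c = 0 -> x = 0.
Proof.
move=> [_ _ hdom] hlarge hc cn xc0; apply: contra_eq (erefl x) => /eqP xn.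
have hJ := Bsubmod_left_ideal (annihilator_Bsubmod hc).
have [d [hd [dc0 dn]]] := hlarge _ hJ (ex_intro _ x (conj xc0 xn)).
by case: (hdom d c hd hc dc0).
Qed.

Lemma large_domain_embeds_into_sub N :
  is_integral_domain (invariants B) -> large_in B (invariants B) ->
  is_Bsubmod B N -> nonzero_set N -> embeds_into_sub B N.
Proof.
move=> hdom hlarge hN nzN.
have [c [hc [Nc cn]]] := hlarge N (Bsubmod_left_ideal hN) nzN.
exists (fun x => x * c); split=> [||x]; first exact: invariant_Bhom_mulr.
- move=> x y /eqP; rewrite -subr_eq0 -mulrBl => /eqP e.
  by apply/eqP; rewrite -subr_eq0; apply/eqP;
    apply: (large_domain_invariant_regular hdom hlarge hc cn e).
- exact: Bsubmod_mull.
Qed.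

Lemma large_central_not_embeds_into_quot N :
  (forall a, invariants B a -> centre a) -> large_in B (invariants B) ->
  is_Bsubmod B N -> nonzero_set N -> ~ embeds_into_quot B N.
Proof.
move=> hZ hlarge hN nzN [g [_ hg hg0]].
have [c [hc [Nc cn]]] := hlarge N (Bsubmod_left_ideal hN) nzN.
apply: cn; apply: hg0.
have gc : N (g c - c * g 1) by have := hg (Lmul c) 1 (hL c); rewrite /Lmul mulr1.
have cg1 : N (c * g 1) by rewrite hZ //; apply: Bsubmod_mull.
by have [_ hadd _] := hN; have := hadd _ _ gc cg1; rewrite subrK.
Qed.

End Invariants.

Theorem corollary3p5 (k : comPzRingType) (A : algType k) (B : (A -> A) -> Prop)
  (hB : is_subalg_End B) (hL : contains_L B)
  (hZ : forall a, invariants B a -> centre a) :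
  critically_compressible B <->
  (is_integral_domain (invariants B) /\ large_in B (invariants B)).
Proof.
split=> [[[x0 x0n] hsub hquot]|[hdom hlarge]].
- have one_nz : (1 : A) <> 0 by move=> h; apply: x0n; rewrite -(mulr1 x0) h mulr0.
  have regular N := fun hN nzN =>
    embeds_into_sub_regular_invariant hL one_nz (hsub N hN nzN).
  split; last first.
    move=> I hI nzI; have [c [? ? ? _]] := regular I (left_ideal_Bsubmod hI) nzI.
    by exists c.
  split=> // [x y hx _|x y _ hy]; first exact: hZ.
  exact: (invariants_no_zero_divisors hB hL regular hquot hy).
- split; first by exists 1; case: hdom.
  + by move=> N; apply: (large_domain_embeds_into_sub hB hL).
  + by move=> N; apply: (large_central_not_embeds_into_quot hB hL).
Qed.
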